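(* Let $h>0$, $0\le\alpha<1/4$, $g=(0,0)$, $t=\dfrac{2h}{\tan(\pi/4-\alpha)}$, $s_p=(-t/2,h)$ and $s_q=(t/2,h)$. Then the worst-case uncertainty of this pair satisfies $$\varepsilon(g,\{s_p,s_q\})\;\le\;\sqrt{\frac{1+2\alpha}{1-4\alpha}}\cdot\frac{2h\sin(2\alpha)}{1-\sin(2\alpha)}.$$
   Context: Work in $\mathbb{R}^2$ with coordinates $(x,z)$. The ground line is $G=\{z=0\}$ and the viewing line is $S=\{z=h\}$, $h>0$. Fix $\alpha>0$. For a point $s$ and a unit vector $u$, the wedge $W(s,u)=\{s+rv:\ r\ge 0,\ |v|=1,\ \angle(v,u)\le\alpha\}$ (apex $s$, opening angle $2\alpha$). For a target $g$ and camera location $s$, $\mathcal W(g,s)$ is the set of all wedges $W(s,u)$ containing $g$. For $C\subseteq S$, $\varepsilon(g,C)=\sup\{\operatorname{diam}(\bigcap_{s\in C}W_s): W_s\in\mathcal W(g,s)\ \forall s\in C\}$. *)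

From Stdlib Require Import Reals Lra.
Open Scope R_scope.

Definition point := (R * R)%type.

Definition padd (p q : point) : point := (fst p + fst q, snd p + snd q).
Definition pscale (r : R) (p : point) : point := (r * fst p, r * snd p).
Definition dot (p q : point) : R := fst p * fst q + snd p * snd q.
Definition norm (p : point) : R := sqrt (dot p p).
Definition dist (p q : point) : R := norm (padd p (pscale (-1) q)).
Definition unit_vec (u : point) : Prop := norm u = 1.

Definition angle (v u : point) : R := acos (dot v u).

Definition wedge (alpha : R) (s u : point) (p : point) : Prop :=
  exists r v, 0 <= r /\ unit_vec v /\ angle v u <= alpha /\ p = padd s (pscale r v).

Definition on_view_line (h : R) (s : point) : Prop := snd s = h.

Definition diam_le (A : point -> Prop) (d : R) : Prop :=
  forall x y, A x -> A y -> dist x y <= d.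

(* eps(g, C) <= B: for every choice of wedges W_s = W(s, u s) in the family
   \mathcal W(g,s) (i.e. u s a unit vector and g in W(s, u s)) for s in C,
   the diameter of the intersection of the W_s over s in C is at most B.
   This is exactly "sup {...} <= B". *)
Definition eps_le (alpha : R) (g : point) (C : point -> Prop) (B : R) : Prop :=
  forall u : point -> point,
    (forall s, C s -> unit_vec (u s) /\ wedge alpha s (u s) g) ->
    diam_le (fun p => forall s, C s -> wedge alpha s (u s) p) B.

From Pilot Require Import Defs.
From Stdlib Require Import Reals Lra Psatz.
Open Scope R_scope.

(* Write (k, m) = (cos α, sin α) and L = t/2.  Read in the frame of its axis, a wedge is the cone
   a >= 0, -m a <= k b <= m a.  Both wedges contain g, so every point of their intersection lies
   within angle 2α of the rays from s_p and from s_q towards g; the two doubled cones confine it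
   to distance ρ = L |g - s|/h of each camera.  Inside one wedge, points at distance at most ρ
   spread over a width at most 2 ρ sin α across the line of sight; the two lines of sight are
   transversal, whence |x - y|² <= 16 h² m² (k + m)² / (k - m)⁶, which is below the stated
   bound because sin α <= α. *)

Definition psub (p q : point) : point := (fst p - fst q, snd p - snd q).
Definition cross (p q : point) : R := fst p * snd q - snd p * fst q.

(* With c = cos θ, s = sin θ and 0 <= θ <= π/2: the angle from [u] to [w] is at most θ. *)
Definition within_angle (c s : R) (u w : point) : Prop :=
  0 <= dot u w /\ - (s * dot u w) <= c * cross u w <= s * dot u w.

(* [(dot u w, cross u w)] are the coordinates of [w] in the frame of [u]; changing to this frame
   multiplies dot and cross products by [dot u u]. *)
Lemma dot_frame (u v w : point) :
  dot u u * dot v w = dot u v * dot u w + cross u v * cross u w.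
Proof. unfold dot, cross; ring. Qed.

Lemma cross_frame (u v w : point) :
  dot u u * cross v w = dot u v * cross u w - cross u v * dot u w.
Proof. unfold dot, cross; ring. Qed.

Lemma dot_self_nonneg (p : point) : 0 <= dot p p.
Proof. unfold dot; nra. Qed.

Lemma unit_vec_dot (u : point) : unit_vec u -> dot u u = 1.
Proof.
  unfold unit_vec, norm; intros Hu.
  rewrite <- (sqrt_sqrt _ (dot_self_nonneg u)), Hu; ring.
Qed.

Lemma dist_psub (p q : point) : Defs.dist p q = sqrt (dot (psub p q) (psub p q)).
Proof. unfold Defs.dist, norm, dot, psub, padd, pscale; simpl; f_equal; ring. Qed.

Lemma within_angle_scale (c s r : R) (u w : point) :
  0 <= r -> within_angle c s u w -> within_angle c s u (pscale r w).
Proof.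
  unfold within_angle, dot, cross, pscale; simpl; intros Hr (H0 & H1 & H2).
  repeat split; nra.
Qed.

Lemma within_angle_of_angle_le (alpha : R) (u v : point) :
  0 <= alpha <= PI / 2 -> dot u u = 1 -> dot v v = 1 -> angle v u <= alpha ->
  within_angle (cos alpha) (sin alpha) u v.
Proof.
  intros Ha Hu Hv Hang.
  pose proof PI2_1.
  pose proof (dot_frame u v v) as pythag.
  rewrite Hu, Hv in pythag.
  replace (angle v u) with (acos (dot u v)) in Hang by (unfold angle, dot; f_equal; ring).
  set (c := dot u v) in *; set (d := cross u v) in *.
  assert (Hcos : cos alpha <= c).
  { assert (Hc : -1 <= c <= 1) by nra.
    rewrite <- (cos_acos c Hc).
    pose proof (acos_bound c); apply cos_decr_1; lra. }
  assert (Hk : 0 <= cos alpha) by (apply cos_ge_0; lra).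
  assert (Hm : 0 <= sin alpha) by (apply sin_ge_0; lra).
  assert (Htrig : sin alpha * sin alpha + cos alpha * cos alpha = 1)
    by (rewrite <- (sin2_cos2 alpha); unfold Rsqr; ring).
  assert (Hd : - sin alpha <= d <= sin alpha) by (split; nra).
  unfold within_angle; fold c d; repeat split; nra.
Qed.

Lemma wedge_within_angle (alpha : R) (s u z : point) :
  0 <= alpha <= PI / 2 -> unit_vec u -> wedge alpha s u z ->
  within_angle (cos alpha) (sin alpha) u (psub z s).
Proof.
  intros Ha Hu (r & v & Hr & Hv & Hang & ->).
  replace (psub (padd s (pscale r v)) s) with (pscale r v)
    by (unfold psub, padd, pscale; simpl; f_equal; ring).
  apply within_angle_scale; [exact Hr|].
  apply within_angle_of_angle_le; auto using unit_vec_dot.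
Qed.

Lemma cone_rotate_nonneg (k m a b : R) :
  k*k + m*m = 1 -> 0 <= m <= k -> 0 <= a -> - (m*a) <= k*b <= m*a ->
  0 <= k*a - m*b /\ 0 <= k*a + m*b.
Proof.
  intros Hkm Hmk Ha Hb.
  assert (0 <= (k*k - m*m)*a) by (apply Rmult_le_pos; nra).
  assert (0 < k) by nra.
  split; nra.
Qed.

Lemma angle_add_coord (k m a b C S : R) :
  k*k + m*m = 1 -> 0 <= m <= k ->
  0 <= a -> - (m*a) <= k*b <= m*a ->
  0 <= C -> - (m*C) <= k*S <= m*C ->
  0 <= a*C + b*S /\
  - (2*k*m*(a*C + b*S)) <= (k*k - m*m)*(a*S - b*C) <= 2*k*m*(a*C + b*S).
Proof.
  intros Hkm Hmk Ha Hb HC HS.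
  pose proof (cone_rotate_nonneg k m a b Hkm Hmk Ha Hb) as [Hw1 Hw2].
  pose proof (cone_rotate_nonneg k m C S Hkm Hmk HC HS) as [HG1 HG2].
  repeat split.
  - assert (0 <= (m*a - k*b)*(m*C - k*S) + (m*a + k*b)*(m*C + k*S)) by nra.
    assert (0 <= (k*k - m*m)*(a*C)) by (apply Rmult_le_pos; nra).
    assert (0 <= k*k*(a*C + b*S)) by nra.
    nra.
  - assert (2*k*m*(a*C + b*S) + (k*k - m*m)*(a*S - b*C)
            = (m*a - k*b)*(k*C - m*S) + (k*a + m*b)*(m*C + k*S)) by ring.
    nra.
  - assert (2*k*m*(a*C + b*S) - (k*k - m*m)*(a*S - b*C)
            = (m*a + k*b)*(k*C + m*S) + (k*a - m*b)*(m*C - k*S)) by ring.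
    nra.
Qed.

Lemma cross_bounds_coord (k m a b C S rho : R) :
  k*k + m*m = 1 -> 0 <= m <= k ->
  0 <= a -> - (m*a) <= k*b <= m*a -> a*a + b*b <= rho*rho -> 0 <= rho ->
  0 <= C -> - (m*C) <= k*S <= m*C ->
  rho*(k*S - m*C) <= a*S - b*C <= rho*(k*S + m*C).
Proof.
  intros Hkm Hmk Ha Hb Hab Hrho HC HS.
  pose proof (cone_rotate_nonneg k m C S Hkm Hmk HC HS) as [HG1 HG2].
  assert (Hrot1 : a*k - b*m <= rho).
  { assert ((a*k - b*m)*(a*k - b*m) + (a*m + b*k)*(a*m + b*k) = (a*a + b*b)*(k*k + m*m)) by ring.
    nra. }
  assert (Hrot2 : a*k + b*m <= rho).
  { assert ((a*k + b*m)*(a*k + b*m) + (a*m - b*k)*(a*m - b*k) = (a*a + b*b)*(k*k + m*m)) by ring.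
    nra. }
  assert (E1 : (a*S - b*C)*(k*k + m*m) = (k*S + m*C)*(a*k - b*m) - (k*C - m*S)*(a*m + b*k)) by ring.
  assert (E2 : (a*S - b*C)*(k*k + m*m) = (k*S - m*C)*(a*k + b*m) + (k*C + m*S)*(a*m - b*k)) by ring.
  rewrite Hkm, Rmult_1_r in E1, E2.
  split; nra.
Qed.

(* Here (X, -Y) = z - s_p and g - s_p = (L, -h).  The first cone says cos∠(z - s_p, g - s_p) >= K,
   the condition at s_q bounds the projection L X + h Y by 2 L², so |z - s_p| <= 2 L²/(K |g - s_p|). *)
Lemma double_cone_radius_coord (K M L h X X' Y : R) :
  0 < h <= L -> K*(L*L + h*h) = 2*L*h -> M*(L*L + h*h) = L*L - h*h -> X + X' = 2*L ->
  0 <= L*X + h*Y -> - (M*(L*X + h*Y)) <= K*(h*X - L*Y) <= M*(L*X + h*Y) ->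
  K*(L*Y - h*X') <= M*(L*X' + h*Y) ->
  h*h*(X*X + Y*Y) <= L*L*(L*L + h*h).
Proof.
  intros Hh HK HM HX Hdot [Hlo Hhi] Hq.
  assert (HD : 0 < L*L + h*h) by nra.
  assert (c1 : 2*L*h*(L*Y - h*X) <= (L*L - h*h)*(L*X + h*Y)) by (rewrite <- HK, <- HM; nra).
  assert (c2 : - (2*L*h*(L*Y - h*X)) <= (L*L - h*h)*(L*X + h*Y)) by (rewrite <- HK, <- HM; nra).
  assert (c3 : 2*L*h*(L*Y - h*X') <= (L*L - h*h)*(L*X' + h*Y)) by (rewrite <- HK, <- HM; nra).
  assert (F : 0 <= L*X - h*Y).
  { assert ((L*L + h*h)*(L*X - h*Y) = (L*L - h*h)*(L*X + h*Y) - 2*L*h*(L*Y - h*X)) by ring.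
    nra. }
  assert (Fq : 0 <= L*X' - h*Y).
  { assert ((L*L + h*h)*(L*X' - h*Y) = (L*L - h*h)*(L*X' + h*Y) - 2*L*h*(L*Y - h*X')) by ring.
    nra. }
  assert (Phi : (L*L + h*h)*((L*X + h*Y)*(L*X + h*Y)) - 4*(h*h)*(L*L)*(X*X + Y*Y)
                = (L*X - h*Y)*((L*L - h*h)*(L*X + h*Y) + 2*L*h*(L*Y - h*X))) by ring.
  assert (0 <= (L*X - h*Y)*((L*L - h*h)*(L*X + h*Y) + 2*L*h*(L*Y - h*X)))
    by (apply Rmult_le_pos; lra).
  assert (U : L*X + h*Y <= 2*(L*L)) by nra.
  assert ((L*X + h*Y)*(L*X + h*Y) <= (2*(L*L))*(2*(L*L))) by nra.
  assert (4*(L*L)*(h*h*(X*X + Y*Y)) <= 4*(L*L)*(L*L*(L*L + h*h))) by nra.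
  assert (0 < 4*(L*L)) by nra.
  nra.
Qed.

Lemma within_angle_add (k m : R) (u v w : point) :
  k*k + m*m = 1 -> 0 <= m <= k -> dot u u = 1 ->
  within_angle k m u v -> within_angle k m u w ->
  within_angle (k*k - m*m) (2*k*m) v w.
Proof.
  intros Hkm Hmk Hu [Hv0 Hv] [Hw0 Hw].
  pose proof (dot_frame u v w) as Edot; pose proof (cross_frame u v w) as Ecross.
  rewrite Hu, Rmult_1_l in Edot, Ecross.
  unfold within_angle; rewrite Edot, Ecross.
  apply angle_add_coord; assumption.
Qed.

Lemma cross_within_angle_bounds (k m rho : R) (u G w : point) :
  k*k + m*m = 1 -> 0 <= m <= k -> dot u u = 1 ->
  within_angle k m u G -> within_angle k m u w -> dot w w <= rho*rho -> 0 <= rho ->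
  rho*(k*cross u G - m*dot u G) <= cross w G <= rho*(k*cross u G + m*dot u G).
Proof.
  intros Hkm Hmk Hu [HG0 HG] [Hw0 Hw] Hww Hrho.
  pose proof (dot_frame u w w) as Enorm; pose proof (cross_frame u w G) as Ecross.
  rewrite Hu, Rmult_1_l in Enorm, Ecross.
  rewrite Ecross; rewrite Enorm in Hww.
  apply cross_bounds_coord; assumption.
Qed.

Lemma cross_spread (k m r : R) (u G v w : point) :
  k*k + m*m = 1 -> 0 <= m <= k -> dot u u = 1 ->
  within_angle k m u G -> within_angle k m u v -> within_angle k m u w ->
  dot v v <= r -> dot w w <= r ->
  (cross v G - cross w G)^2 <= 4*(m*m)*r*dot G G.
Proof.
  intros Hkm Hmk Hu HG Hv Hw Hvr Hwr.
  assert (Hr : 0 <= r) by (pose proof (dot_self_nonneg v); lra).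
  assert (Hrho : sqrt r * sqrt r = r) by (apply sqrt_sqrt, Hr).
  pose proof (sqrt_pos r) as Hrho0.
  pose proof (cross_within_angle_bounds k m (sqrt r) u G v Hkm Hmk Hu HG Hv ltac:(lra) Hrho0).
  pose proof (cross_within_angle_bounds k m (sqrt r) u G w Hkm Hmk Hu HG Hw ltac:(lra) Hrho0).
  assert (HC : dot u G * dot u G <= dot G G).
  { pose proof (dot_frame u G G) as E; rewrite Hu, Rmult_1_l in E.
    rewrite E; nra. }
  destruct HG as [HG0 _].
  assert (Hspread : Rabs (cross v G - cross w G) <= 2*m*sqrt r*dot u G)
    by (apply Rabs_le; split; nra).
  rewrite <- Rsqr_pow2, Rsqr_abs, Rsqr_pow2.
  apply Rle_trans with ((2*m*sqrt r*dot u G)^2).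
  - apply pow_incr; split; [apply Rabs_pos | exact Hspread].
  - replace ((2*m*sqrt r*dot u G)^2) with (4*(m*m)*(sqrt r*sqrt r)*(dot u G*dot u G)) by ring.
    rewrite Hrho. apply Rmult_le_compat_l; [nra | exact HC].
Qed.

Section CameraPair.

Variables h k m L : R.
Hypothesis h_pos : 0 < h.
Hypothesis km_unit : k*k + m*m = 1.
Hypothesis m_nonneg : 0 <= m.
Hypothesis m_lt_k : m < k.
(* For (k, m) = (cos α, sin α) this says tan(π/4 - α) = h/L. *)
Hypothesis L_def : L*(k - m) = h*(k + m).

Let g : point := (0, 0).
Let sp : point := (-L, h).
Let sq : point := (L, h).

Lemma h_le_L : h <= L.
Proof. nra. Qed.

Lemma sqnorm_target_from_camera : (L*L + h*h)*((k - m)*(k - m)) = 2*(h*h).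
Proof.
  replace ((L*L + h*h)*((k - m)*(k - m))) with ((L*(k - m))*(L*(k - m)) + h*h*((k - m)*(k - m)))
    by ring.
  rewrite L_def. nra.
Qed.

Lemma cos_double_camera_angle : (k*k - m*m)*(L*L + h*h) = 2*L*h.
Proof.
  apply Rmult_eq_reg_r with ((k - m)*(k - m)); [|nra].
  rewrite Rmult_assoc, sqnorm_target_from_camera.
  replace (2*L*h*((k - m)*(k - m))) with (2*h*(k - m)*(L*(k - m))) by ring.
  rewrite L_def; ring.
Qed.

Lemma sin_double_camera_angle : 2*k*m*(L*L + h*h) = L*L - h*h.
Proof.
  apply Rmult_eq_reg_r with ((k - m)*(k - m)); [|nra].
  rewrite Rmult_assoc, sqnorm_target_from_camera.
  replace ((L*L - h*h)*((k - m)*(k - m))) with ((L*(k - m))*(L*(k - m)) - h*h*((k - m)*(k - m)))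
    by ring.
  rewrite L_def. nra.
Qed.

Lemma radius_of_double_cones (z : point) :
  within_angle (k*k - m*m) (2*k*m) (psub g sp) (psub z sp) ->
  within_angle (k*k - m*m) (2*k*m) (psub g sq) (psub z sq) ->
  h*h*dot (psub z sp) (psub z sp) <= L*L*(L*L + h*h) /\
  h*h*dot (psub z sq) (psub z sq) <= L*L*(L*L + h*h).
Proof.
  destruct z as [z1 z2].
  unfold within_angle, g, sp, sq, psub, dot, cross; simpl.
  intros [Hp0 Hp] [Hq0 Hq].
  pose proof h_le_L; pose proof cos_double_camera_angle; pose proof sin_double_camera_angle.
  split.
  - enough (h*h*((z1 + L)*(z1 + L) + (h - z2)*(h - z2)) <= L*L*(L*L + h*h)) by lra.
    apply (double_cone_radius_coord (k*k - m*m) (2*k*m) L h (z1 + L) (L - z1) (h - z2));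
      lra.
  - enough (h*h*((L - z1)*(L - z1) + (h - z2)*(h - z2)) <= L*L*(L*L + h*h)) by lra.
    apply (double_cone_radius_coord (k*k - m*m) (2*k*m) L h (L - z1) (z1 + L) (h - z2));
      lra.
Qed.

Lemma cross_diff_sum_sq (x y : point) :
  2*(h*h)*dot (psub x y) (psub x y) <=
  (cross (psub x sp) (psub g sp) - cross (psub y sp) (psub g sp))^2 +
  (cross (psub x sq) (psub g sq) - cross (psub y sq) (psub g sq))^2.
Proof.
  pose proof h_le_L.
  destruct x as [x1 x2], y as [y1 y2].
  unfold g, sp, sq, psub, dot, cross; cbn [fst snd].
  match goal with |- _ <= ?A ^ 2 + ?B ^ 2 =>
    replace (A^2 + B^2) with (2*(h*h)*((x1 - y1)*(x1 - y1)) + 2*(L*L)*((x2 - y2)*(x2 - y2)))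
      by ring end.
  assert (h*h*((x2 - y2)*(x2 - y2)) <= L*L*((x2 - y2)*(x2 - y2))).
  { apply Rmult_le_compat_r; [apply Rle_0_sqr|]. apply Rmult_le_compat; lra. }
  lra.
Qed.

Lemma sqdiam_of_quartic_bound (D : R) :
  h*h*(h*h)*D <= 4*(m*m)*(L*L)*((L*L + h*h)*(L*L + h*h)) ->
  (k - m)^6 * D <= 16*(m*m)*(h*h)*((k + m)*(k + m)).
Proof.
  intros HD.
  assert (Hh4 : 0 < h*h*(h*h)) by (apply Rmult_lt_0_compat; nra).
  apply Rmult_le_reg_l with (h*h*(h*h)); [exact Hh4|].
  apply Rle_trans with ((k - m)^6 * (4*(m*m)*(L*L)*((L*L + h*h)*(L*L + h*h)))).
  - replace (h*h*(h*h)*((k - m)^6 * D)) with ((k - m)^6 * (h*h*(h*h)*D)) by ring.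
    apply Rmult_le_compat_l; [apply pow_le; lra | exact HD].
  - right.
    replace ((k - m)^6 * (4*(m*m)*(L*L)*((L*L + h*h)*(L*L + h*h))))
      with (4*(m*m)*((L*(k - m))*(L*(k - m)))*
            (((L*L + h*h)*((k - m)*(k - m)))*((L*L + h*h)*((k - m)*(k - m))))) by ring.
    rewrite L_def, sqnorm_target_from_camera; ring.
Qed.

Variables up uq : point.
Hypothesis up_unit : dot up up = 1.
Hypothesis uq_unit : dot uq uq = 1.
Hypothesis g_seen_p : within_angle k m up (psub g sp).
Hypothesis g_seen_q : within_angle k m uq (psub g sq).

Lemma intersection_sqdiam (x y : point) :
  within_angle k m up (psub x sp) -> within_angle k m uq (psub x sq) ->
  within_angle k m up (psub y sp) -> within_angle k m uq (psub y sq) ->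
  (k - m)^6 * dot (psub x y) (psub x y) <= 16*(m*m)*(h*h)*((k + m)*(k + m)).
Proof.
  intros Hxp Hxq Hyp Hyq.
  assert (Hmk : 0 <= m <= k) by lra.
  assert (Hh2 : 0 < h*h) by nra.
  set (r := L*L*(L*L + h*h)/(h*h)).
  assert (Hr : forall z, h*h*dot z z <= L*L*(L*L + h*h) -> dot z z <= r).
  { intros z Hz. unfold r. apply Rmult_le_reg_l with (h*h); [exact Hh2|].
    replace (h*h*(L*L*(L*L + h*h)/(h*h))) with (L*L*(L*L + h*h)) by (field; lra). exact Hz. }
  destruct (radius_of_double_cones x) as [Hrxp Hrxq];
    [apply (within_angle_add k m up); auto | apply (within_angle_add k m uq); auto |].
  destruct (radius_of_double_cones y) as [Hryp Hryq];
    [apply (within_angle_add k m up); auto | apply (within_angle_add k m uq); auto |].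
  pose proof (cross_spread k m r up (psub g sp) (psub x sp) (psub y sp) km_unit Hmk up_unit
                g_seen_p Hxp Hyp (Hr _ Hrxp) (Hr _ Hryp)) as Hsp.
  pose proof (cross_spread k m r uq (psub g sq) (psub x sq) (psub y sq) km_unit Hmk uq_unit
                g_seen_q Hxq Hyq (Hr _ Hrxq) (Hr _ Hryq)) as Hsq.
  pose proof (cross_diff_sum_sq x y) as Hsum.
  replace (dot (psub g sp) (psub g sp)) with (L*L + h*h) in Hsp by (unfold dot; simpl; ring).
  replace (dot (psub g sq) (psub g sq)) with (L*L + h*h) in Hsq by (unfold dot; simpl; ring).
  apply sqdiam_of_quartic_bound.
  assert (h*h*dot (psub x y) (psub x y) <= 4*(m*m)*r*(L*L + h*h)) by lra.
  replace (4*(m*m)*(L*L)*((L*L + h*h)*(L*L + h*h))) with (h*h*(4*(m*m)*r*(L*L + h*h)))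
    by (unfold r; field; lra).
  rewrite (Rmult_assoc (h*h)). apply Rmult_le_compat_l; [apply Rle_0_sqr | assumption].
Qed.

End CameraPair.

Lemma sum_diff_ratio_bound (k m a : R) :
  k*k + m*m = 1 -> 0 <= m <= a -> a < 1/4 -> 0 <= k ->
  (k + m)*(k + m)*(1 - 4*a) <= (1 + 2*a)*(k*k)*((k - m)*(k - m)).
Proof.
  intros Hkm Hma Ha Hk.
  assert (Hk1 : k <= 1) by nra.
  assert (Hkma : 0 <= k*m <= a) by (split; nra).
  assert (E : (1 + 2*a)*(k*k)*((k - m)*(k - m)) - (k + m)*(k + m)*(1 - 4*a)
              = 6*a - 4*(k*m)*(1 - a) - (1 + 2*a)*(m*m)*(1 - 2*(k*m))).
  { replace (k*k) with (1 - m*m) by lra.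
    replace ((k - m)*(k - m)) with (k*k + m*m - 2*(k*m)) by ring.
    replace ((k + m)*(k + m)) with (k*k + m*m + 2*(k*m)) by ring.
    rewrite Hkm; ring. }
  assert ((1 + 2*a)*(m*m)*(1 - 2*(k*m)) <= (1 + 2*a)*(a*a)).
  { assert (m*m <= a*a) by nra.
    assert (0 <= (1 + 2*a)*(m*m)) by nra.
    nra. }
  assert (4*(k*m)*(1 - a) <= 4*a*(1 - a)) by nra.
  nra.
Qed.

Lemma sqrt_le_camera_bound (alpha k m h D : R) :
  k*k + m*m = 1 -> 0 <= m <= alpha -> m < k -> alpha < 1/4 -> 0 < h ->
  (k - m)^6 * D <= 16*(m*m)*(h*h)*((k + m)*(k + m)) ->
  sqrt D <= sqrt ((1 + 2*alpha)/(1 - 4*alpha)) * (2*h*(2*m*k)/(1 - 2*m*k)).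
Proof.
  intros Hkm Hma Hmk Ha Hh HD.
  assert (Hsq : 1 - 2*m*k = (k - m)*(k - m)) by (rewrite <- Hkm; ring).
  assert (HQ : 0 <= (1 + 2*alpha)/(1 - 4*alpha))
    by (apply Rmult_le_pos; [lra | apply Rlt_le, Rinv_0_lt_compat; lra]).
  assert (HP : 0 <= 2*h*(2*m*k)/(1 - 2*m*k)).
  { assert (0 <= m*k) by nra.
    rewrite Hsq. apply Rmult_le_pos; [nra | apply Rlt_le, Rinv_0_lt_compat; nra]. }
  rewrite <- (sqrt_square _ HP), <- (sqrt_mult_alt _ _ HQ).
  apply sqrt_le_1_alt.
  assert (Hpos : 0 < (1 - 4*alpha)*(k - m)^6) by (apply Rmult_lt_0_compat; [lra | apply pow_lt; lra]).
  apply Rmult_le_reg_l with ((1 - 4*alpha)*(k - m)^6); [exact Hpos|].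
  replace ((1 - 4*alpha)*(k - m)^6 *
           ((1 + 2*alpha)/(1 - 4*alpha) * (2*h*(2*m*k)/(1 - 2*m*k) * (2*h*(2*m*k)/(1 - 2*m*k)))))
    with (16*(m*m)*(h*h)*((1 + 2*alpha)*(k*k)*((k - m)*(k - m))))
    by (rewrite Hsq; field; split; nra).
  pose proof (sum_diff_ratio_bound k m alpha Hkm Hma Ha ltac:(lra)).
  assert (0 <= 16*(m*m)*(h*h)) by nra.
  nra.
Qed.

Lemma tan_quarter_pi_minus (alpha : R) :
  cos alpha + sin alpha <> 0 ->
  tan (PI/4 - alpha) = (cos alpha - sin alpha)/(cos alpha + sin alpha).
Proof.
  intros Hnz.
  unfold tan; rewrite sin_minus, cos_minus, sin_PI4, cos_PI4.
  assert (0 < sqrt 2) by (apply sqrt_lt_R0; lra).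
  field; split; [exact Hnz | lra].
Qed.

Theorem lemma2 (h alpha : R) (hh : 0 < h) (ha0 : 0 <= alpha) (ha1 : alpha < 1/4) :
  let g : point := (0, 0) in
  let t := 2 * h / tan (PI / 4 - alpha) in
  let sp : point := (- t / 2, h) in
  let sq : point := (t / 2, h) in
  eps_le alpha g (fun s => s = sp \/ s = sq)
    (sqrt ((1 + 2 * alpha) / (1 - 4 * alpha)) * (2 * h * sin (2 * alpha) / (1 - sin (2 * alpha)))).
Proof.
  intros g t sp sq u Hu x y Hx Hy.
  rewrite dist_psub, sin_2a.
  pose proof PI2_1.
  set (k := cos alpha); set (m := sin alpha).
  assert (Hkm : k*k + m*m = 1) by (unfold k, m; rewrite <- (sin2_cos2 alpha); unfold Rsqr; ring).
  assert (Hma : 0 <= m <= alpha).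
  { split; [apply sin_ge_0; lra|].
    destruct (Req_dec alpha 0) as [->|]; [unfold m; rewrite sin_0; lra | apply Rlt_le, sin_lt_x; lra]. }
  assert (Hmk : m < k) by (assert (0 <= k) by (apply cos_ge_0; lra); nra).
  set (L := h*(k + m)/(k - m)).
  assert (HL : L*(k - m) = h*(k + m)) by (unfold L; field; lra).
  assert (Ht : t / 2 = L).
  { unfold t; rewrite tan_quarter_pi_minus; fold k m; [unfold L; field | ]; lra. }
  assert (Hsp : sp = (-L, h)) by (unfold sp; rewrite <- Ht; f_equal; field).
  assert (Hsq : sq = (L, h)) by (unfold sq; rewrite Ht; reflexivity).
  assert (Hseen : forall s z, s = sp \/ s = sq -> z = g \/ z = x \/ z = y ->
                              within_angle k m (u s) (psub z s)).
  { intros s z Hs Hz; apply wedge_within_angle; [lra | apply Hu, Hs |].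
    destruct Hz as [-> | [-> | ->]]; [apply Hu | apply Hx | apply Hy]; exact Hs. }
  apply (sqrt_le_camera_bound alpha k m h); auto.
  rewrite Hsp, Hsq in Hu, Hseen.
  apply (intersection_sqdiam h k m L hh Hkm (proj1 Hma) Hmk HL (u (-L, h)) (u (L, h))).
  1, 2: apply unit_vec_dot, Hu; auto.
  all: apply Hseen; auto.
Qed.
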